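(* Consider Method 2.3 (a modified level method, described in the context) and suppose it does not terminate and the numbers $\varepsilon_k$ satisfy $\varepsilon_k>0$ for all $k\in K$ and $\varepsilon_k\to0$. Then the sequences $\{z_k\},\{\sigma_k\}$ are defined for all $k\in K$ and $\lim_{k\to\infty}f(z_k)=f^*$, $\lim_{k\to\infty}\sigma_k=f^*$.
   Context: Setting: $D\subset\mathbb{R}^n$ convex, closed and bounded (nonempty); $f$ convex on $\mathbb{R}^n$; $f^*=\min_Df$; $X^*=\{x\in D:f(x)=f^*\}$, $x^*\in X^*$ fixed; $K=\{0,1,\dots\}$; $\operatorname{epi}(f,D)=\{(x,\gamma):x\in D,\gamma\ge f(x)\}$; $\partial f(x)$ is the subdifferential. Method 2.3: choose closed convex $M_0\subset\mathbb{R}^{n+1}$ with $\operatorname{epi}(f,D)\subset M_0$, numbers $\varepsilon_0\ge0$, $\alpha_0\le f^*\le\beta_{-1}$, and $\bar\lambda\in(0,1)$; set $\delta_0=+\infty$, $i=k=0$. Step 1: let $(y_i,\gamma_i)$ solve $\min\{\gamma:(x,\gamma)\in M_i,\ x\in D,\ \gamma\ge\alpha_i\}$; if $f(y_i)=\gamma_i$ stop. Step 2: choose $\lambda_i\in(0,\bar\lambda]$; set $\beta_i=\min\{\beta_{i-1},\delta_i\}$, $l_i=(1-\lambda_i)\gamma_i+\lambda_i\beta_i$, and $U_i=\{x\in D:\exists\gamma\le l_i \text{ with }(x,\gamma)\in M_i\}$. Step 3: choose $x_i\in U_i$. Step 4: if $f(x_i)-\gamma_i>\varepsilon_k$ set $Q_i=M_i$;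 otherwise set $i_k=i$, $z_k=x_{i_k}$, $\sigma_k=\gamma_{i_k}$, choose closed convex $Q_i\subset\mathbb{R}^{n+1}$ with $(x^*,f^* )\in Q_i$, choose $\varepsilon_{k+1}\ge0$, $k\leftarrow k+1$. Step 5: $M_{i+1}=Q_i\cap\{(x,\gamma):f(x_i)+\langle a_i,x-x_i\rangle\le\gamma\}$ with $a_i\in\partial f(x_i)$. Step 6: $\alpha_{i+1}=\gamma_i$, $\delta_{i+1}=f(x_i)$; $i\leftarrow i+1$; go to Step 1. *)

(* points of R^n are row vectors 'rV[R]_n over R : realType;
   points of R^{n+1} are pairs ('rV[R]_n * R). *)
From HB Require Import structures.
From mathcomp Require Import all_boot all_order all_algebra.
From mathcomp Require Import all_classical all_reals all_analysis.
Set Implicit Arguments. Unset Strict Implicit. Unset Printing Implicit Defensive.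
Import Order.TTheory GRing.Theory Num.Theory.
Import numFieldNormedType.Exports.
Local Open Scope classical_set_scope.
Local Open Scope ring_scope.

Definition dotv {R : realType} {n : nat} (a x : 'rV[R]_n) : R :=
  \sum_(j < n) a 0 j * x 0 j.

Definition convex_setv {R : realType} {n : nat} (D : set 'rV[R]_n) : Prop :=
  forall x y t, D x -> D y -> 0 <= t <= 1 -> D (t *: x + (1 - t) *: y).

Definition convex_setp {R : realType} {n : nat} (M : set ('rV[R]_n * R)) : Prop :=
  forall p q t, M p -> M q -> 0 <= t <= 1 ->
    M (t *: p.1 + (1 - t) *: q.1, t * p.2 + (1 - t) * q.2).

Definition convex_funv {R : realType} {n : nat} (f : 'rV[R]_n -> R) : Prop :=
  forall x y t, 0 <= t <= 1 ->
    f (t *: x + (1 - t) *: y) <= t * f x + (1 - t) * f y.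

Definition subgrad {R : realType} {n : nat} (f : 'rV[R]_n -> R) (x a : 'rV[R]_n) : Prop :=
  forall y, f x + dotv a (y - x) <= f y.

Definition epi {R : realType} {n : nat} (f : 'rV[R]_n -> R) (D : set 'rV[R]_n)
  : set ('rV[R]_n * R) := [set p | D p.1 /\ f p.1 <= p.2].

From HB Require Import structures.
From mathcomp Require Import all_boot all_order all_algebra.
From mathcomp Require Import all_classical all_reals all_analysis.
From mathcomp Require Import ring lra.
Import Order.TTheory GRing.Theory Num.Theory.
Import numFieldNormedType.Exports.
Set Implicit Arguments. Unset Strict Implicit. Unset Printing Implicit Defensive.
Local Open Scope classical_set_scope.
Local Open Scope ring_scope.

(* Every model [M i] contains [(xstar, f xstar)], so the bounds [gamma i] increase and stay
   below [f xstar <= f (x i)].  Suppose no iteration after [i0] were critical.  Then the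
   counter stays at [k = kk i0], the models only shrink, and each [M j] lies above the cuts
   of all earlier tail iterates [x i].  As [gamma] converges, [f (x i) - gamma j > eps k / 2]
   for late [i < j]; since [x j] lies below the level [l j], between [gamma j] and
   [f (x i)], the cut of [i] forces [- <a i, x j - x i> >= (1 - lambar) eps k / 2].
   Subgradients of [f] are bounded on the bounded set [D] and [x] has a cluster point in the
   compact [D], a contradiction.  So every counter value [k] has a critical iteration, where
   [0 <= f (z_k) - f xstar <= eps k] and [0 <= f xstar - sigma_k <= eps k]. *)

Section ConvexAnalysis.
Variables (R : realType) (n : nat).
Implicit Types (f : 'rV[R]_n -> R) (u v w : 'rV[R]_n).

Lemma row_coord_le_norm v k : `|v 0 k| <= `|v|.
Proof.
have /mapP[j _ ->] : `|v 0 k| \in [seq `|v ij.1 ij.2| | ij : 'I_1 * 'I_n].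
  by apply/mapP; exists (0, k) => //=; rewrite mem_enum.
by rewrite [leRHS]/Num.norm /= mx_normrE; apply/bigmax_geP; right; exists j.
Qed.

Lemma bounded_set_coord (D : set 'rV[R]_n) :
  bounded_set D -> exists r, forall v, D v -> forall k, `|v 0 k| <= r.
Proof.
case=> r0 [_ r0D]; exists (r0 + 1) => v Dv k.
by apply: le_trans (row_coord_le_norm v k) _; apply: (r0D (r0 + 1) _ v Dv); lra.
Qed.

Lemma dotv_deltaZ (a : 'rV[R]_n) (s : R) k : dotv a (s *: delta_mx 0 k) = s * a 0 k.
Proof.
rewrite /dotv (bigD1 k) //= big1 => [|j /negbTE jk]; rewrite !mxE ?eqxx ?jk /=.
  by rewrite mulr1 addr0 mulrC.
by rewrite !mulr0.
Qed.

Lemma normr_dotv_le (a d : 'rV[R]_n) (A : R) :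
  (forall k, `|a 0 k| <= A) -> `|dotv a d| <= n%:R * (A * `|d|).
Proof.
move=> aA; apply: le_trans (ler_norm_sum _ _ _) _.
apply: le_trans (_ : \sum_(k < n) A * `|d| <= _).
  by apply: ler_sum => k _; rewrite normrM ler_pM ?row_coord_le_norm.
by rewrite sumr_const card_ord mulr_natl.
Qed.

Lemma convex_funv_le_max f u w t : convex_funv f -> 0 <= t <= 1 ->
  f (t *: u + (1 - t) *: w) <= Num.max (f u) (f w).
Proof.
move=> cf t01; apply: le_trans (cf u w t t01) _.
have [t0 t1] := andP t01.
have fu : f u <= Num.max (f u) (f w) by rewrite le_max lexx.
have fw : f w <= Num.max (f u) (f w) by rewrite le_max lexx orbT.
apply: le_trans (_ : t * Num.max (f u) (f w) + (1 - t) * Num.max (f u) (f w) <= _).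
  by apply: lerD; apply: ler_wpM2l => //; lra.
by rewrite -mulrDl addrC subrK mul1r.
Qed.

Lemma convex_funv_line_bounded f (e : 'rV[R]_n) (c : R) : convex_funv f ->
  exists B, forall s, `|s| <= c -> f (s *: e) <= B.
Proof.
move=> cf; set C := `|c| + 1; have C0 : 0 < C by rewrite /C; have := normr_ge0 c; lra.
exists (Num.max (f (C *: e)) (f (- C *: e))) => s sc.
have sC : - C <= s <= C by move: sc; have := ler_norm c; rewrite ler_norml /C; lra.
set t := (s + C) / (2 * C).
have t01 : 0 <= t <= 1 by rewrite /t ler_pdivrMr ?divr_ge0 //=; lra.
have -> : s *: e = t *: (C *: e) + (1 - t) *: (- C *: e).
  by rewrite !scalerA -scalerDl /t; congr (_ *: _); field; lra.
exact: convex_funv_le_max.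
Qed.

(* Induction on the number [m] of leading coordinates allowed to be nonzero:
   a point of such a box is the midpoint of a point of a box with one fewer
   free coordinate and a point of a coordinate axis. *)
Lemma convex_funv_box_bounded f : convex_funv f ->
  forall r, exists B, forall v, (forall k, `|v 0 k| <= r) -> f v <= B.
Proof.
move=> cf.
suff box m (r : R) : exists B, forall v, (forall k, `|v 0 k| <= r) ->
    (forall k : 'I_n, (m <= k)%N -> v 0 k = 0) -> f v <= B.
  move=> r; have [B fB] := box n r; exists B => v vr.
  by apply: fB => // k; rewrite leqNgt ltn_ord.
elim: m r => [|m IH] r.
  by exists (f 0) => v _ v0; have -> // : v = 0; apply/rowP => k; rewrite mxE v0.
case: (ltnP m n) => [mn|nm]; last first.
  have [B fB] := IH r; exists B => v vr _; apply: fB => // k mk.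
  by have := leq_trans nm mk; rewrite leqNgt ltn_ord.
set km := Ordinal mn; set e : 'rV[R]_n := delta_mx 0 km.
have [B1 fB1] := IH (2 * r).
have [B2 fB2] := convex_funv_line_bounded e (2 * r) cf.
exists (B1 / 2 + B2 / 2) => v vr vm.
set s := v 0 km; set w : 'rV[R]_n := \row_k (if k == km then 0 else v 0 k).
have -> : v = (1/2 : R) *: (2 *: w) + (1 - 1/2) *: ((2 * s) *: e).
  by apply/rowP => k; rewrite !mxE; case: eqVneq => [->|_] /=; rewrite /s; field.
have fw : f (2 *: w) <= B1.
  apply: fB1 => j; rewrite !mxE; case: eqVneq => [_|jkm].
    - by rewrite mulr0 normr0 mulr_ge0 //; apply: le_trans (vr km).
    - by rewrite normrM ger0_norm // ler_wpM2l.
    - by rewrite mulr0.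
    - move=> mj; rewrite vm ?mulr0 // ltn_neqAle mj andbT.
      by apply: contra_neq jkm => jm; apply: val_inj; rewrite /= -jm.
have fs : f ((2 * s) *: e) <= B2.
  by apply: fB2; rewrite normrM ger0_norm // ler_pM2l //; exact: vr.
have half01 : 0 <= (1/2 : R) <= 1 by apply/andP; split; lra.
by apply: le_trans (cf _ _ _ half01) _; lra.
Qed.

(* [s * a_k <= f (v + s e_k) - f v] for [s = 1, -1], where [f] is bounded above on a box
   around [D], and below on [D] since [2 f 0 <= f v + f (- v)]. *)
Lemma convex_funv_subgrad_bounded f (D : set 'rV[R]_n) : convex_funv f -> bounded_set D ->
  exists A, forall v a k, D v -> subgrad f v a -> `|a 0 k| <= A.
Proof.
move=> cf /bounded_set_coord[r Dr].
have [B fB] := convex_funv_box_bounded cf (r + 1).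
exists (2 * (B - f 0)) => v a k Dv va.
have f_lb : 2 * f 0 - B <= f v.
  have fN : f (- v) <= B by apply: fB => j; rewrite mxE normrN; have := Dr v Dv j; lra.
  have half01 : 0 <= (1/2 : R) <= 1 by apply/andP; split; lra.
  have := cf v (- v) _ half01; rewrite scalerN -scalerBl.
  have -> : 1/2 - (1 - 1/2) = 0 :> R by lra.
  by rewrite scale0r; lra.
have step s : `|s| = 1 -> s * a 0 k <= B - f v.
  move=> s1; have := va (v + s *: delta_mx 0 k); rewrite [_ - v]addrC addKr dotv_deltaZ.
  have : f (v + s *: delta_mx 0 k) <= B.
    apply: fB => j; rewrite !mxE; apply: le_trans (ler_normD _ _) _.
    by apply: lerD; [exact: Dr | case: (_ && _); rewrite ?mulr1 ?mulr0 ?normr0 ?s1].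
  lra.
have := step 1 (normr1 _); have := step (-1) (normrN1 _).
by rewrite ler_norml; lra.
Qed.

Lemma cluster_dotv_small (D : set 'rV[R]_n) (x a : nat -> 'rV[R]_n) (A c : R) N :
  closed D -> bounded_set D -> (forall i, D (x i)) ->
  (forall i k, `|a i 0 k| <= A) -> 0 < c ->
  exists i j, (N <= i < j)%N /\ `|dotv (a i) (x j - x i)| < c.
Proof.
move=> clD bD xD aA c0.
set K := n%:R * `|A|; have K0 : 0 <= K by rewrite mulr_ge0.
set d := c / (2 * (K + 1)); have d0 : 0 < d by rewrite divr_gt0 //; lra.
have [p [_ clp]] : exists p, (D `&` cluster (x @ \oo)) p.
  by apply: bounded_closed_compact => //; exists 0%N => // i _; exact: xD.
have near_p M : exists2 i, (M <= i)%N & `|p - x i| < d.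
  have [|z [[i Mi <-] pd]] :=
    clp [set x i | i in [set i | (M <= i)%N]] (ball p d) _ (nbhsx_ballx p d d0).
    by exists M => // i /= Mi; exists i.
  by exists i => //; move: pd; rewrite mx_norm_ball.
have [i Ni pi] := near_p N; have [j ij pj] := near_p i.+1.
exists i, j; split; first by rewrite Ni.
apply: le_lt_trans (normr_dotv_le _ (fun k => le_trans (aA i k) (ler_norm A))) _.
have xji : `|x j - x i| < 2 * d.
  have -> : x j - x i = (p - x i) - (p - x j) by rewrite opprB [RHS]addrC addrA subrK.
  by apply: le_lt_trans (ler_normB _ _) _; lra.
have K1 : 0 < K + 1 by lra.
have -> : c = K * (2 * d) + c / (K + 1) by rewrite /d; field; exact: lt0r_neq0.
rewrite mulrA -/K; apply: le_lt_trans (ler_wpM2l K0 (ltW xji)) _.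
by rewrite ltrDl divr_gt0.
Qed.
End ConvexAnalysis.

Lemma nondecreasing_bounded_gap (R : realType) (u : nat -> R) (b e : R) :
  {homo u : i j / (i <= j)%N >-> i <= j} -> (forall i, u i <= b) -> 0 < e ->
  exists N, forall i j, (N <= i)%N -> u j - u i < e.
Proof.
move=> u_nd ub e0.
have supu : has_sup (range u).
  by split; [exists (u 0%N), 0%N | exists b => _ [i _ <-]].
have [_ [N _ <-] uN] := sup_adherent e0 supu.
exists N => i j Ni.
have uj : u j <= sup (range u) by apply: (ub_le_sup supu.2); exists j.
by have := u_nd _ _ Ni; lra.
Qed.

Lemma cvg_dist_le (R : realFieldType) (u e : nat -> R) (l : R) :
  e @ \oo --> 0 -> (forall k, `|l - u k| <= e k) -> u @ \oo --> l.
Proof.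
move=> /cvgrPdist_le e0 ue; apply/cvgrPdist_le => d d0.
apply: filterS (e0 d d0) => k; rewrite sub0r normrN => ekd.
exact: le_trans (ue k) (le_trans (ler_norm _) ekd).
Qed.

Section LevelMethod.
Variables (R : realType) (n : nat) (D : set 'rV[R]_n) (f : 'rV[R]_n -> R)
  (xstar : 'rV[R]_n)
  (M Q : nat -> set ('rV[R]_n * R)) (y x a : nat -> 'rV[R]_n)
  (gamma alpha beta lam l eps : nat -> R) (lambar : R) (kk : nat -> nat).

(* Step 4 takes its second branch at [i], i.e. [i = i_k] with [k = kk i]. *)
Definition critical i := f (x i) - gamma i <= eps (kk i).

Definition cut i : set ('rV[R]_n * R) :=
  [set p | f (x i) + dotv (a i) (p.1 - x i) <= p.2].

Hypotheses (clD : closed D) (bD : bounded_set D) (cf : convex_funv f).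
Hypotheses (Dxstar : D xstar) (xstar_min : forall z, D z -> f xstar <= f z).
Hypotheses (epi_M0 : epi f D `<=` M 0) (alpha0_le : alpha 0 <= f xstar).
Hypotheses (lambar01 : 0 < lambar < 1) (kk0 : kk 0 = 0%N).
Hypothesis step1 : forall i, [/\ M i (y i, gamma i), D (y i), alpha i <= gamma i &
  forall z g, M i (z, g) -> D z -> alpha i <= g -> gamma i <= g].
Hypothesis lam_range : forall i, 0 < lam i <= lambar.
Hypothesis beta_succ : forall i, beta i.+1 = Order.min (beta i) (f (x i)).
Hypothesis level_def : forall i, l i = (1 - lam i) * gamma i + lam i * beta i.
Hypothesis x_in_level : forall i, D (x i) /\ exists g, g <= l i /\ M i (x i, g).
Hypothesis step4_noncritical :
  forall i, eps (kk i) < f (x i) - gamma i -> Q i = M i /\ kk i.+1 = kk i.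
Hypothesis step4_critical : forall i, critical i ->
  [/\ closed (Q i), convex_setp (Q i), Q i (xstar, f xstar) & kk i.+1 = (kk i).+1].
Hypothesis subgrad_x : forall i, subgrad f (x i) (a i).
Hypothesis model_succ : forall i, M i.+1 = Q i `&` cut i.
Hypothesis alpha_succ : forall i, alpha i.+1 = gamma i.
Hypothesis eps_gt0 : forall k, 0 < eps k.

Lemma noncritical_step i : ~~ critical i -> Q i = M i /\ kk i.+1 = kk i.
Proof. by move=> nci; apply: step4_noncritical; rewrite ltNge. Qed.

Lemma opt_in_model i : M i (xstar, f xstar).
Proof.
elim: i => [|i IH]; first exact: epi_M0.
rewrite model_succ; split; last exact: subgrad_x.
have [ci|nci] := boolP (critical i); first by case: (step4_critical ci).
by rewrite (noncritical_step nci).1.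
Qed.

Lemma gamma_le_opt i : gamma i <= f xstar.
Proof.
have gamma_le j : alpha j <= f xstar -> gamma j <= f xstar.
  by case: (step1 j) => _ _ _; apply; [exact: opt_in_model | exact: Dxstar].
suff alpha_le : alpha i <= f xstar by exact: (gamma_le i).
by elim: i => [//|i IH]; rewrite alpha_succ (gamma_le i).
Qed.

Lemma gamma_nondecreasing : {homo gamma : i j / (i <= j)%N >-> i <= j}.
Proof. by apply/nondecreasing_seqP => i; case: (step1 i.+1); rewrite alpha_succ. Qed.

Lemma opt_le_iterate i : f xstar <= f (x i).
Proof. by apply: xstar_min; case: (x_in_level i). Qed.

Lemma beta_le_iterate i j : (i < j)%N -> beta j <= f (x i).
Proof.
move=> /subnK <-; elim: (j - i.+1)%N => [|d IH]; rewrite beta_succ ge_min.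
  by rewrite lexx orbT.
by rewrite IH.
Qed.

(* [f (x i) + <a i, x j - x i> <= l j], and [beta j <= f (x i)] gives
   [f (x i) - l j >= (1 - lam j) (f (x i) - gamma j)]. *)
Lemma level_gap i j : (i < j)%N -> M j `<=` cut i ->
  (1 - lambar) * (f (x i) - gamma j) <= - dotv (a i) (x j - x i).
Proof.
move=> ij Mj_cut; case: (x_in_level j) => _ [g [gl /Mj_cut cut_g]].
rewrite /cut /= in cut_g.
have := beta_le_iterate ij; have := gamma_le_opt j; have := opt_le_iterate i.
have [lam0 lam1] := andP (lam_range j); move: gl; rewrite level_def => gl fi gj bj.
have : 0 <= lam j * (f (x i) - beta j) by apply: mulr_ge0; lra.
have : (1 - lambar) * (f (x i) - gamma j) <= (1 - lam j) * (f (x i) - gamma j).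
  by apply: ler_wpM2r; lra.
lra.
Qed.

Section NoncriticalTail.
Variable i0 : nat.
Hypothesis noncritical_tail : forall j, (i0 <= j)%N -> ~~ critical j.

Lemma noncritical_tail_count j : (i0 <= j)%N -> kk j = kk i0.
Proof.
move=> /subnK <-; elim: (j - i0)%N => [//|d IH].
by rewrite addSn (noncritical_step (noncritical_tail (leq_addl _ _))).2.
Qed.

Lemma noncritical_tail_cut i j : (i0 <= i < j)%N -> M j `<=` cut i.
Proof.
case/andP=> i0i /subnK <-; elim: (j - i.+1)%N => [|d IH].
  by rewrite add0n model_succ => p [].
rewrite addSn model_succ (noncritical_step (noncritical_tail _)).1 => [p [/IH] //|].
by rewrite (leq_trans i0i) // -addSnnS leq_addl.
Qed.
End NoncriticalTail.

Lemma critical_infinitely_often i0 : exists2 j, (i0 <= j)%N & critical j.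
Proof.
apply: contrapT => no_crit.
have noncritical j : (i0 <= j)%N -> ~~ critical j.
  by move=> i0j; apply/negP => cj; apply: no_crit; exists j.
have [_ lambar1] := andP lambar01.
set e := eps (kk i0); have e2 : 0 < e / 2 by rewrite divr_gt0 ?eps_gt0.
have [N1 gamma_gap] := nondecreasing_bounded_gap gamma_nondecreasing gamma_le_opt e2.
have [A subgrad_A] := convex_funv_subgrad_bounded cf bD.
have xD i : D (x i) by case: (x_in_level i).
have c0 : 0 < (1 - lambar) * (e / 2) by rewrite mulr_gt0 //; lra.
have [i [j [/andP[Ni ij] small]]] := cluster_dotv_small (maxn i0 N1) clD bD xD
  (fun i k => subgrad_A _ _ k (xD i) (subgrad_x i)) c0.
have i0i : (i0 <= i)%N by apply: leq_trans Ni; exact: leq_maxl.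
have i0ij : (i0 <= i < j)%N by rewrite i0i.
have gap := level_gap ij (noncritical_tail_cut noncritical i0ij).
have gamma_ij := gamma_gap i j (leq_trans (leq_maxr _ _) Ni).
have e_lt : e < f (x i) - gamma i.
  by rewrite /e -(noncritical_tail_count noncritical i0i) ltNge; exact: noncritical.
have : (1 - lambar) * (e / 2) < (1 - lambar) * (f (x i) - gamma j).
  by rewrite ltr_pM2l; lra.
by have := ler_norm (- dotv (a i) (x j - x i)); rewrite normrN; lra.
Qed.

Lemma critical_same_count i : exists j, [/\ (i <= j)%N, kk j = kk i & critical j].
Proof.
have [j ij cj] := critical_infinitely_often i.
move: cj; rewrite -(subnKC ij); move: (j - i)%N => d; clear j ij.
elim: d i => [|d IH] i cd; first by exists i; rewrite addn0 in cd.
have [ci|nci] := boolP (critical i); first by exists i.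
have [|j [i1j kj cj]] := IH i.+1; first by rewrite addSnnS.
by exists j; rewrite kj (noncritical_step nci).2 ltnW.
Qed.

Lemma critical_at_each_count k : exists i, kk i = k /\ critical i.
Proof.
elim: k => [|k [i [ki ci]]].
  by have [j [_ kj cj]] := critical_same_count 0; exists j; rewrite kj kk0.
have [j [_ kj cj]] := critical_same_count i.+1.
by exists j; case: (step4_critical ci) => _ _ _ kS; rewrite kj kS ki.
Qed.

Lemma critical_near_opt i : critical i ->
  `|f xstar - f (x i)| <= eps (kk i) /\ `|f xstar - gamma i| <= eps (kk i).
Proof.
rewrite /critical => ci; have := opt_le_iterate i; have := gamma_le_opt i.
by rewrite !ler_norml; lra.
Qed.

End LevelMethod.

Theorem theorem2p3p3 (R : realType) (n : nat)
  (D : set 'rV[R]_n) (f : 'rV[R]_n -> R) (xstar : 'rV[R]_n)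
  (M Q : nat -> set ('rV[R]_n * R))
  (y x a : nat -> 'rV[R]_n)
  (gamma alpha beta lam l eps : nat -> R)
  (betam1 lambar : R) (kk : nat -> nat) :
  (* standing assumptions *)
  convex_setv D -> closed D -> bounded_set D -> D !=set0 ->
  convex_funv f ->
  D xstar -> (forall z, D z -> f xstar <= f z) ->
  (* initialization *)
  closed (M 0) -> convex_setp (M 0) -> epi f D `<=` M 0 ->
  alpha 0 <= f xstar -> f xstar <= betam1 ->
  0 < lambar < 1 ->
  kk 0 = 0%N ->
  (* Step 1 and non-termination *)
  (forall i, [/\ M i (y i, gamma i), D (y i), alpha i <= gamma i &
     forall z g, M i (z, g) -> D z -> alpha i <= g -> gamma i <= g]) ->
  (forall i, f (y i) <> gamma i) ->
  (* Step 2 *)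
  (forall i, 0 < lam i <= lambar) ->
  beta 0 = betam1 ->
  (forall i, beta i.+1 = Order.min (beta i) (f (x i))) ->
  (forall i, l i = (1 - lam i) * gamma i + lam i * beta i) ->
  (* Step 3 : x_i in U_i *)
  (forall i, D (x i) /\ exists g, g <= l i /\ M i (x i, g)) ->
  (* Step 4 *)
  (forall i, eps (kk i) < f (x i) - gamma i -> Q i = M i /\ kk i.+1 = kk i) ->
  (forall i, f (x i) - gamma i <= eps (kk i) ->
     [/\ closed (Q i), convex_setp (Q i), Q i (xstar, f xstar) & kk i.+1 = (kk i).+1]) ->
  (* Step 5 *)
  (forall i, subgrad f (x i) (a i)) ->
  (forall i, M i.+1 = Q i `&` [set p | f (x i) + dotv (a i) (p.1 - x i) <= p.2]) ->
  (* Step 6 *)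
  (forall i, alpha i.+1 = gamma i) ->
  (* assumptions on eps_k *)
  (forall k, 0 < eps k) -> eps @ \oo --> 0 ->
  (* conclusion: z_k, sigma_k defined for all k, and the limits *)
  (forall k, exists i, kk i = k /\ f (x i) - gamma i <= eps (kk i)) /\
  (forall ik : nat -> nat,
     (forall k, kk (ik k) = k /\ f (x (ik k)) - gamma (ik k) <= eps (kk (ik k))) ->
     (fun k => f (x (ik k))) @ \oo --> f xstar /\
     (fun k => gamma (ik k)) @ \oo --> f xstar).
Proof.
move=> _ clD bD _ cf Dxstar xstar_min _ _ epi_M0 alpha0_le _ lambar01 kk0 step1 _ lam_range _
  beta_succ level_def x_in_level step4_noncritical step4_critical subgrad_x model_succ alpha_succ
  eps_gt0 eps_cvg.
have each_count := critical_at_each_count clD bD cf Dxstar xstar_min epi_M0 alpha0_le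
  lambar01 kk0 step1 lam_range beta_succ level_def x_in_level step4_noncritical step4_critical
  subgrad_x model_succ alpha_succ eps_gt0.
have near_opt := critical_near_opt Dxstar xstar_min epi_M0 alpha0_le step1 x_in_level
  step4_noncritical step4_critical subgrad_x model_succ alpha_succ.
split=> [k|ik ik_crit]; first exact: each_count.
have near_opt_ik k : `|f xstar - f (x (ik k))| <= eps k /\ `|f xstar - gamma (ik k)| <= eps k.
  by have [kk_ik crit_ik] := ik_crit k; rewrite -[in eps k]kk_ik; exact: near_opt.
by split; apply: (cvg_dist_le eps_cvg) => k; case: (near_opt_ik k).
Qed.
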